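(* Let $\mathcal{S}\subseteq\{0,1\}^N$ be nonempty. The following are equivalent: (1) $\mathcal{S}$ is a lattice (closed under coordinatewise minimum and maximum); (2) $\mathcal{S}$ is the set of minimizers of some submodular function $g:\{0,1\}^N\to\mathbb{R}$; (3) the Hamming distance function $d_{\mathcal{S}}(x)=\min_{y\in\mathcal{S}}\|x-y\|_1$ is submodular.
   Context: A function $g:\{0,1\}^N\to\mathbb{R}$ is submodular if $g(x\vee y)+g(x\wedge y)\le g(x)+g(y)$ for all $x,y$, where $\vee,\wedge$ are coordinatewise max and min. *)

From mathcomp Require Import all_boot all_order all_algebra.
Set Implicit Arguments. Unset Strict Implicit. Unset Printing Implicit Defensive.
Import Order.TTheory GRing.Theory Num.Theory.
Local Open Scope ring_scope.

Definition cube (N : nat) := {ffun 'I_N -> bool}.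

Definition cjoin N (x y : cube N) : cube N := [ffun i => x i || y i].
Definition cmeet N (x y : cube N) : cube N := [ffun i => x i && y i].

Definition submodular (R : numDomainType) N (g : cube N -> R) : Prop :=
  forall x y : cube N, g (cjoin x y) + g (cmeet x y) <= g x + g y.

Definition is_lattice N (S : {set cube N}) : Prop :=
  forall x y, x \in S -> y \in S -> (cjoin x y \in S) /\ (cmeet x y \in S).

Definition argmin_set (R : numDomainType) N (g : cube N -> R) : {set cube N} :=
  [set x | [forall y, g x <= g y]].

Definition hamming N (x y : cube N) : nat := #|[set i | x i != y i]|.

(* d_S(x) = min_{y in S} ||x - y||_1 ; the seed N is >= every Hamming distance,
   so for nonempty S this is exactly the minimum over S. *)
Definition distS N (S : {set cube N}) (x : cube N) : nat :=
  \big[minn/N]_(y in S) hamming x y.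

From mathcomp Require Import all_boot all_order all_algebra.
Import Order.TTheory GRing.Theory Num.Theory.
Set Implicit Arguments. Unset Strict Implicit.

(* (1) => (3): if a, b in S realise d_S(x), d_S(y), then a \/ b and a /\ b lie in S and,
   coordinatewise, the disagreements of (x \/ y, x /\ y) with (a \/ b, a /\ b) are no
   more than those of (x, y) with (a, b).
   (3) => (2): d_S vanishes exactly on S, so S = argmin d_S.
   (2) => (1): if x, y minimise a submodular g with minimum m, then
   g (x \/ y) + g (x /\ y) <= 2 m forces both terms to equal m. *)

Section Hamming.

Variable N : nat.
Implicit Types (x y a b : cube N) (S : {set cube N}).

Lemma hamming_leq_dim x y : (hamming x y <= N)%N.
Proof. by rewrite /hamming -[N in (_ <= N)%N]card_ord max_card. Qed.

Lemma hamming_eq0 x y : (hamming x y == 0%N) = (x == y).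
Proof.
rewrite /hamming cards_eq0; apply/eqP/eqP => [xy | -> ]; last first.
  by apply/setP => i; rewrite !inE eqxx.
by apply/ffunP => i; apply/eqP; move/setP/(_ i): xy; rewrite !inE => /negbFE.
Qed.

Lemma hamming_join_meet x y a b :
  (hamming (cjoin x y) (cjoin a b) + hamming (cmeet x y) (cmeet a b)
     <= hamming x a + hamming y b)%N.
Proof.
rewrite /hamming -cardsUI -[X in (_ <= X)%N]cardsUI.
by apply: leq_add; apply: subset_leq_card; apply/subsetP => i;
  rewrite !inE !ffunE; case: (x i) (y i) (a i) (b i) => [] [] [] [].
Qed.

Lemma distS_le_hamming S x y : y \in S -> (distS S x <= hamming x y)%N.
Proof. by move=> yS; rewrite /distS -minEnat -leEnat bigmin_le_cond. Qed.

Lemma distS_attained S x : S != set0 -> exists2 y, y \in S & distS S x = hamming x y.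
Proof.
case/set0Pn=> y0 y0S; have [y yS ymin] := arg_minnP (hamming x) y0S.
exists y => //; apply/eqP; rewrite eqn_leq distS_le_hamming //=.
by rewrite /distS -minEnat -leEnat; apply: le_bigmin => //; apply: hamming_leq_dim.
Qed.

Lemma distS_eq0 S x : S != set0 -> (distS S x == 0%N) = (x \in S).
Proof.
move=> S0; apply/idP/idP => [d0 | xS]; last first.
  by rewrite -leqn0 (leq_trans (distS_le_hamming x xS)) // leqn0 hamming_eq0.
have [y yS dy] := distS_attained x S0.
by move: d0; rewrite dy hamming_eq0 => /eqP ->.
Qed.

End Hamming.

Local Open Scope ring_scope.

Section Submodular.

Variables (R : numDomainType) (N : nat).
Implicit Types (S : {set cube N}) (g : cube N -> R).

Lemma lattice_distS_submodular S :
  S != set0 -> is_lattice S -> submodular (fun x => (distS S x)%:R : R).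
Proof.
move=> S0 latS x y; have [a aS ->] := distS_attained x S0.
have [b bS ->] := distS_attained y S0; have [joinS meetS] := latS a b aS bS.
rewrite -!natrD ler_nat; apply: leq_trans (hamming_join_meet x y a b).
by rewrite leq_add ?distS_le_hamming.
Qed.

Lemma argmin_distS S : S != set0 -> S = argmin_set (fun x => (distS S x)%:R : R).
Proof.
move=> S0; have [y0 y0S] := set0Pn _ S0.
have distS_in y : y \in S -> distS S y = 0%N by rewrite -(distS_eq0 y S0) => /eqP.
apply/setP => x; rewrite inE; apply/idP/forallP => [xS z | xmin].
  by rewrite distS_in ?ler0n.
by rewrite -(distS_eq0 x S0) -leqn0 -(ler_nat R) -(distS_in y0 y0S); apply: xmin.
Qed.

Lemma argmin_submodular_lattice g : submodular g -> is_lattice (argmin_set g).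
Proof.
move=> subg x y; rewrite !inE => /forallP xmin /forallP ymin.
have sum_le : g (cjoin x y) + g (cmeet x y) <= g x + g y := subg x y.
have join_le : g (cjoin x y) <= g x.
  by rewrite -(lerD2r (g (cmeet x y))) (le_trans sum_le) ?lerD2l.
have meet_le : g (cmeet x y) <= g y.
  by rewrite -(lerD2l (g (cjoin x y))) (le_trans sum_le) ?lerD2r.
by split; apply/forallP => z; [apply: le_trans join_le _ | apply: le_trans meet_le _].
Qed.

End Submodular.

Theorem corollary2 (R : realFieldType) (N : nat) (S : {set cube N}) :
  S != set0 ->
  [/\ (is_lattice S <-> exists g : cube N -> R, submodular g /\ S = argmin_set g),
      (is_lattice S <-> submodular (fun x => (distS S x)%:R : R)) &
      ((exists g : cube N -> R, submodular g /\ S = argmin_set g) <->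
        submodular (fun x => (distS S x)%:R : R))].
Proof.
move=> S0.
have lat_dist := @lattice_distS_submodular R N S S0.
have dist_argmin : submodular (fun x => (distS S x)%:R : R) ->
    exists g : cube N -> R, submodular g /\ S = argmin_set g.
  by move=> subd; exists (fun x => (distS S x)%:R); split; last exact: argmin_distS.
have argmin_lat : (exists g : cube N -> R, submodular g /\ S = argmin_set g) ->
    is_lattice S.
  by case=> g [subg ->]; apply: argmin_submodular_lattice.
by split; split; tauto.
Qed.
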